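(* Let $\mathcal H$ be a real Hilbert space, $T:\mathcal H\rightrightarrows\mathcal H$ maximal monotone, $a,b\ge0$, $\psi(\rho,z):=a\rho^2+b\rho+\big(\rho\|J_{\rho T}(z)-z\|\big)^2$, $z\in\mathcal H$ with $0\notin T(z)$, $0<\theta_-<\theta_+<\infty$, and let $\rho_-,\rho_+>0$ be such that $\psi(\rho_-,z)=\theta_-$ and $\psi(\rho_+,z)=\theta_+$. Let $\rho>0$. (a) If $\psi(\rho,z)<\theta_-$, then $\rho<\rho_-$ and $\rho_+\le\rho\theta_+/\psi(\rho,z)$. (b) If $\psi(\rho,z)>\theta_+$, then $\rho\theta_-/\psi(\rho,z)\le\rho_-$ and $\rho_+<\rho$.
   Context: $J_{\rho T}:=(\rho T+I)^{-1}$ denotes the resolvent of $\rho T$. *)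

From HB Require Import structures.
From mathcomp Require Import all_boot all_order all_algebra.
From mathcomp Require Import all_classical all_reals all_analysis.
Set Implicit Arguments. Unset Strict Implicit. Unset Printing Implicit Defensive.
Import Order.TTheory GRing.Theory Num.Theory.
Import numFieldNormedType.Exports.
Local Open Scope classical_set_scope.
Local Open Scope ring_scope.

(* A real Hilbert space is a complete normed space V over R whose norm is
   induced by an inner product [inner]. *)
Definition is_inner_product {R : realType} {V : normedModType R}
  (inner : V -> V -> R) : Prop :=
  [/\ (forall x y, inner x y = inner y x),
      (forall x y z, inner (x + y) z = inner x z + inner y z),
      (forall (c : R) x y, inner (c *: x) y = c * inner x y)
    & (forall x, inner x x = `|x| ^+ 2)].

(* set-valued operators T : V ⇉ V, represented as V -> set V *)
Definition monotone_op {R : realType} {V : normedModType R}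
  (inner : V -> V -> R) (T : V -> set V) : Prop :=
  forall x y u v, T x u -> T y v -> 0 <= inner (x - y) (u - v).

Definition maximal_monotone {R : realType} {V : normedModType R}
  (inner : V -> V -> R) (T : V -> set V) : Prop :=
  monotone_op inner T /\
  forall S : V -> set V, monotone_op inner S ->
    (forall x, T x `<=` S x) -> forall x, S x = T x.

(* J_{rho T}(z) = (rho T + I)^{-1}(z): the (unique, for maximal monotone T
   and rho > 0) x with z \in x + rho T(x). *)
Definition resolvent {R : realType} {V : normedModType R}
  (T : V -> set V) (rho : R) (z : V) : V :=
  xget z [set x | exists2 u, T x u & z = x + rho *: u].

Definition psi {R : realType} {V : normedModType R}
  (T : V -> set V) (a b : R) (rho : R) (z : V) : R :=
  a * rho ^+ 2 + b * rho + (rho * `|resolvent T rho z - z|) ^+ 2.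

(* The resolvent is well defined by Minty's theorem: for rho > 0 and the
   monotone set B = rho T - z, the closed balls with centre (Y - W) / 2 and
   squared radius q + |(Y - W) / 2|^2, where (q, Y, W) ranges over convex
   combinations of the triples (<y, v>, y, v) with v in B y, have a common
   point x.  Monotonicity makes the radii nonnegative, and the squared radius
   is strongly concave along mixtures, so the centres of nearly minimal balls
   form a Cauchy sequence whose limit lies in every ball.  For the ball of a
   single point this says <x - y, x + v> <= 0, and maximality of T then puts
   (z - x) / rho in T x.
   Writing J_rho z - z = - rho u with u in T (J_rho z), monotonicity of T
   (with Cauchy-Schwarz) shows that rho |-> |J_rho z - z| is nondecreasing,
   and it is positive since 0 is not in T z.  Hence both psi(., z) and
   psi(rho, z) / rho = a rho + b + rho |J_rho z - z|^2 are nondecreasing,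
   which gives (a) and (b) by comparing rho with rho_- and rho_+. *)

From HB Require Import structures.
From mathcomp Require Import all_boot all_order all_algebra.
From mathcomp Require Import all_classical all_reals all_analysis.
From mathcomp Require Import ring lra.
Set Implicit Arguments. Unset Strict Implicit. Unset Printing Implicit Defensive.
Import Order.TTheory GRing.Theory Num.Theory.
Import numFieldNormedType.Exports.
Local Open Scope classical_set_scope.
Local Open Scope ring_scope.

Section InnerProduct.
Variables (R : realType) (V : normedModType R) (inner : V -> V -> R).
Hypothesis inner_prod : is_inner_product inner.

Lemma innerC x y : inner x y = inner y x. Proof. by case: inner_prod. Qed.
Lemma innerDl x y u : inner (x + y) u = inner x u + inner y u.
Proof. by case: inner_prod. Qed.
Lemma innerZl (c : R) x u : inner (c *: x) u = c * inner x u.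
Proof. by case: inner_prod. Qed.
Lemma inner_sqr x : inner x x = `|x| ^+ 2. Proof. by case: inner_prod. Qed.

Lemma innerDr x y u : inner u (x + y) = inner u x + inner u y.
Proof. by rewrite innerC innerDl !(innerC u). Qed.
Lemma innerZr (c : R) x u : inner u (c *: x) = c * inner u x.
Proof. by rewrite innerC innerZl (innerC u). Qed.
Lemma inner0l u : inner 0 u = 0.
Proof. by rewrite -(scale0r (0 : V)) innerZl mul0r. Qed.
Lemma innerNl x u : inner (- x) u = - inner x u.
Proof. by rewrite -scaleN1r innerZl mulN1r. Qed.
Lemma innerNr x u : inner u (- x) = - inner u x.
Proof. by rewrite -scaleN1r innerZr mulN1r. Qed.

Definition innerE := (innerDl, innerDr, innerNl, innerNr, innerZl, innerZr).

Lemma sqr_norm_convex (t : R) (x y : V) :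
  `|(1 - t) *: x + t *: y| ^+ 2 =
  (1 - t) * `|x| ^+ 2 + t * `|y| ^+ 2 - t * (1 - t) * `|x - y| ^+ 2.
Proof. by rewrite -!inner_sqr !innerE (innerC y x); ring. Qed.

Lemma inner_le_normM x y : inner x y <= `|x| * `|y|.
Proof.
have [->|x0] := eqVneq x 0; first by rewrite inner0l normr0 mul0r.
have [->|y0] := eqVneq y 0; first by rewrite innerC inner0l normr0 mulr0.
have xy0 : 0 < `|x| * `|y| by rewrite mulr_gt0 ?normr_gt0.
have := sqr_ge0 `|(`|y| *: x) - `|x| *: y|.
rewrite -inner_sqr !innerE (innerC y x) !inner_sqr.
nra.
Qed.

End InnerProduct.

Lemma ler_forall_subunit_mul (R : realFieldType) (x y : R) :
  0 <= y -> (forall s, 0 < s < 1 -> s * x <= y) -> x <= y.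
Proof.
move=> y0 sx_le; case: (lerP x y) => // yx.
have x0 : 0 < x := le_lt_trans y0 yx.
have := sx_le ((x + y) / (2 * x)).
have -> : (x + y) / (2 * x) * x = (x + y) / 2 by field; rewrite gt_eqF.
rewrite divr_gt0 ?ltr_pdivrMr ?mulr_gt0 //=; lra.
Qed.

(* [K h c] stands for the closed ball of centre [c] and squared radius [h]. *)
Section BallsCommonPoint.
Variables (R : realType) (V : completeNormedModType R) (K : R -> V -> Prop).
Hypothesis K_nonempty : exists h c, K h c.
Hypothesis K_ge0 : forall h c, K h c -> 0 <= h.
Hypothesis K_mix : forall t h1 c1 h2 c2, 0 < t < 1 -> K h1 c1 -> K h2 c2 ->
  exists2 h, K h ((1 - t) *: c1 + t *: c2) &
    h <= (1 - t) * h1 + t * h2 - t * (1 - t) * `|c1 - c2| ^+ 2.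

Let E := [set h | exists c, K h c].

Let E_has_inf : has_inf E.
Proof.
have [h [c Khc]] := K_nonempty.
by split; [exists h, c | exists 0 => h' [c' /K_ge0]].
Qed.

Let m := inf E.

Let inf_le {h c} : K h c -> m <= h.
Proof. by move=> Khc; apply: ge_inf E_has_inf.2 _ _; exists c. Qed.

Let inf_ge0 : 0 <= m.
Proof. by apply: lb_le_inf E_has_inf.1 _ => h' [c' /K_ge0]. Qed.

Let mix_bound {t h1 c1 h2 c2} : 0 < t < 1 -> K h1 c1 -> K h2 c2 ->
  t * (1 - t) * `|c1 - c2| ^+ 2 <= (1 - t) * (h1 - m) + t * (h2 - m).
Proof.
move=> t01 K1 K2; have [h Kh hle] := K_mix t01 K1 K2.
have := inf_le Kh; lra.
Qed.

Let minimizing (hc : nat -> R * V) :=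
  forall n, K (hc n).1 (hc n).2 /\ (hc n).1 - m < harmonic n.

Let minimizing_exists : exists hc, minimizing hc.
Proof.
suff /choice[hc hc_min] : forall n : nat,
    exists hc : R * V, K hc.1 hc.2 /\ hc.1 - m < harmonic n by exists hc.
move=> n; have [h [c Khc] hlt] := inf_adherent (harmonic_gt0 n) E_has_inf.
by exists (h, c); split => //=; rewrite ltrBlDl.
Qed.

Let minimizing_cvg hc : minimizing hc -> cvg ((fun n => (hc n).2) @ \oo).
Proof.
move=> hc_min; pose c n := (hc n).2.
have c_cauchy n k : `|c n - c k| ^+ 2 <= 2 * (harmonic n + harmonic k).
  have [Kn hn] := hc_min n; have [Kk hk] := hc_min k.
  have half01 : 0 < (2^-1 : R) < 1 by apply/andP; split; lra.
  have := mix_bound half01 Kn Kk; rewrite /c; lra.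
apply: cauchy_cvg; apply: cauchy_exP => e e0.
have e0' : 0 < e ^+ 2 / 4 by rewrite divr_gt0 // exprn_gt0.
near \oo => N; exists (c N) => /=; near=> n; rewrite /= -ball_normE /=.
have := c_cauchy N n; have := normr_ge0 (c N - c n).
have : harmonic N < e ^+ 2 / 4.
  by near: N; exact: near_infty_natSinv_lt (PosNum e0').
have : harmonic n < e ^+ 2 / 4.
  by near: n; exact: near_infty_natSinv_lt (PosNum e0').
nra.
Unshelve. all: end_near.
Qed.

Let minimizing_mix_bound hc s h0 c0 n : minimizing hc -> K h0 c0 -> 0 < s < 1 ->
  s * `|(hc n).2 - c0| ^+ 2 <= h0 + harmonic n / (1 - s).
Proof.
move=> hc_min K0 /andP[s0 s1]; have [Kn hn] := hc_min n.
have t01 : 0 < 1 - s < 1 by apply/andP; split; lra.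
have := mix_bound t01 Kn K0.
have -> : h0 + harmonic n / (1 - s) = ((1 - s) * h0 + harmonic n) / (1 - s).
  by field; lra.
rewrite ler_pdivlMr; last by lra.
have e0 : 0 <= harmonic n :> R := harmonic_ge0 n.
have : s * ((hc n).1 - m) <= harmonic n.
  apply: le_trans (_ : _ <= s * harmonic n) _; first by rewrite ler_wpM2l //; lra.
  by rewrite ler_piMl //; lra.
have : 0 <= (1 - s) * m by rewrite mulr_ge0 //; lra.
set X := `|_| ^+ 2; lra.
Qed.

Lemma balls_common_point : exists x, forall h c, K h c -> `|x - c| ^+ 2 <= h.
Proof.
have [hc hc_min] := minimizing_exists.
have /cvg_ex[x cx] := minimizing_cvg hc_min.
exists x => h0 c0 K0; apply: ler_forall_subunit_mul => [|s s01].
  exact: K_ge0 K0.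
have cn : `|(hc n).2 - c0| @[n --> \oo] --> `|x - c0|.
  by apply: cvg_norm; apply: cvgB cx (cvg_cst _).
rewrite expr2 -[leRHS]addr0 -(mul0r (1 - s)^-1).
apply: (ler_cvg_to (cvgM (cvg_cst s) (cvgM cn cn))
  (cvgD (cvg_cst h0) (cvgMr_tmp (b := (1 - s)^-1) (@cvg_harmonic R)))).
by apply: nearW => n /=; rewrite -expr2 minimizing_mix_bound.
Qed.

End BallsCommonPoint.

Section MonotoneCombinations.
Variables (R : realType) (V : completeNormedModType R) (inner : V -> V -> R).
Variable B : V -> set V.
Hypotheses (inner_prod : is_inner_product inner) (B_mono : monotone_op inner B).

Inductive comb : R -> V -> V -> Prop :=
  | comb_graph y v : B y v -> comb (inner y v) y v
  | comb_mix t q1 y1 v1 q2 y2 v2 : 0 <= t <= 1 ->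
      comb q1 y1 v1 -> comb q2 y2 v2 ->
      comb ((1 - t) * q1 + t * q2) ((1 - t) *: y1 + t *: y2)
           ((1 - t) *: v1 + t *: v2).

Lemma comb_affine_ge0 (f : R -> V -> V -> R) :
  (forall t q1 y1 v1 q2 y2 v2,
     f ((1 - t) * q1 + t * q2) ((1 - t) *: y1 + t *: y2) ((1 - t) *: v1 + t *: v2)
     = (1 - t) * f q1 y1 v1 + t * f q2 y2 v2) ->
  (forall y v, B y v -> 0 <= f (inner y v) y v) ->
  forall q y v, comb q y v -> 0 <= f q y v.
Proof.
move=> f_affine f_graph q y v; elim=> [//|t q1 y1 v1 q2 y2 v2 /andP[t0 t1] _ f1 _ f2].
by rewrite f_affine addr_ge0 // mulr_ge0 // subr_ge0.
Qed.

Lemma comb_cross q1 y1 v1 q2 y2 v2 : comb q1 y1 v1 -> comb q2 y2 v2 ->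
  inner y1 v2 + inner y2 v1 <= q1 + q2.
Proof.
move=> c1 c2; rewrite -subr_ge0; move: q1 y1 v1 c1.
apply: comb_affine_ge0 => [t q y v q' y' v'|y v Byv].
  by rewrite !(innerE inner_prod); ring.
move: q2 y2 v2 c2; apply: comb_affine_ge0 => [t q y' v' q' y'' v''|y' v' Byv'].
  by rewrite !(innerE inner_prod); ring.
by have := B_mono Byv Byv'; rewrite !(innerE inner_prod) (innerC inner_prod y' v); lra.
Qed.

Lemma polarization y v :
  inner y v = `|2^-1 *: (y + v)| ^+ 2 - `|2^-1 *: (y - v)| ^+ 2.
Proof.
by rewrite -!(inner_sqr inner_prod) !(innerE inner_prod) (innerC inner_prod v y); field.
Qed.

Definition comb_ball h c := exists q y v,
  [/\ comb q y v, c = 2^-1 *: (y - v) & h = q + `|c| ^+ 2].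

Lemma comb_ball_ge0 h c : comb_ball h c -> 0 <= h.
Proof.
move=> [q [y [v [cqyv -> ->]]]].
have := comb_cross cqyv cqyv; rewrite polarization.
have := sqr_ge0 `|2^-1 *: (y + v)|; lra.
Qed.

Lemma comb_ball_mix t h1 c1 h2 c2 : 0 < t < 1 ->
  comb_ball h1 c1 -> comb_ball h2 c2 ->
  exists2 h, comb_ball h ((1 - t) *: c1 + t *: c2) &
    h <= (1 - t) * h1 + t * h2 - t * (1 - t) * `|c1 - c2| ^+ 2.
Proof.
move=> /andP[t0 t1] [q1 [y1 [v1 [c1qyv c1E ->]]]] [q2 [y2 [v2 [c2qyv c2E ->]]]].
exists ((1 - t) * (q1 + `|c1| ^+ 2) + t * (q2 + `|c2| ^+ 2)
        - t * (1 - t) * `|c1 - c2| ^+ 2) => //.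
exists ((1 - t) * q1 + t * q2), ((1 - t) *: y1 + t *: y2), ((1 - t) *: v1 + t *: v2).
split; first by apply: comb_mix => //; apply/andP; split; lra.
  rewrite c1E c2E !scalerBr !scalerDr !scalerA !(mulrC 2^-1).
  by rewrite opprD addrACA.
by rewrite (sqr_norm_convex inner_prod); ring.
Qed.

Lemma comb_ball_graph y v : B y v ->
  comb_ball (`|2^-1 *: (y + v)| ^+ 2) (2^-1 *: (y - v)).
Proof.
move=> Byv; exists (inner y v), y, v; split => //; first exact: comb_graph.
by rewrite polarization subrK.
Qed.

Lemma monotone_common_point : (exists y v, B y v) ->
  exists x, forall y v, B y v -> inner (x - y) (x + v) <= 0.
Proof.
move=> [y0 [v0 /comb_ball_graph B0]].
have [x x_ball] := balls_common_point (ex_intro _ _ (ex_intro _ _ B0))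
  comb_ball_ge0 comb_ball_mix.
exists x => y v /comb_ball_graph/x_ball.
have -> : inner (x - y) (x + v) =
    `|x - 2^-1 *: (y - v)| ^+ 2 - `|2^-1 *: (y + v)| ^+ 2.
  rewrite -!(inner_sqr inner_prod) !(innerE inner_prod).
  rewrite (innerC inner_prod y x) (innerC inner_prod v x).
  by rewrite (innerC inner_prod v y); field.
by rewrite subr_le0.
Qed.

End MonotoneCombinations.

Section MaximalMonotone.
Variables (R : realType) (V : completeNormedModType R) (inner : V -> V -> R).
Variable T : V -> set V.
Hypotheses (inner_prod : is_inner_product inner) (T_max : maximal_monotone inner T).

Lemma maximal_monotone_related x u :
  (forall y v, T y v -> 0 <= inner (x - y) (u - v)) -> T x u.
Proof.
move=> xu_related; pose S y := T y `|` [set v | y = x /\ v = u].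
have S_mono : monotone_op inner S.
  move=> y1 y2 v1 v2 [T1|[-> ->]] [T2|[-> ->]].
  - exact: T_max.1 T1 T2.
  - by rewrite -opprB -(opprB u) (innerNl inner_prod) (innerNr inner_prod) opprK;
      exact: xu_related.
  - exact: xu_related.
  - by rewrite subrr (inner0l inner_prod).
by rewrite -(T_max.2 S S_mono (fun y v => @or_introl _ _)); right.
Qed.

Lemma maximal_monotone_graph_nonempty : exists x u, T x u.
Proof.
case: (pselect (exists x u, T x u)) => // graph_empty; exists 0, 0.
by apply: maximal_monotone_related => y v Tyv; case: graph_empty; exists y, v.
Qed.

Lemma minty rho z : 0 < rho -> exists x u, T x u /\ z = x + rho *: u.
Proof.
move=> rho0; pose B y v := exists2 u, T y u & v = rho *: u - z.
have B_mono : monotone_op inner B.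
  move=> y1 y2 _ _ [u1 T1 ->] [u2 T2 ->].
  rewrite opprB addrA subrK -scalerBr (innerZr inner_prod).
  exact: mulr_ge0 (ltW rho0) (T_max.1 _ _ _ _ T1 T2).
have [|x x_related] := monotone_common_point inner_prod B_mono.
  have [y [u Tyu]] := maximal_monotone_graph_nonempty.
  by exists y, (rho *: u - z), u.
exists x, (rho^-1 *: (z - x)); split; last first.
  by rewrite scalerA mulfV ?gt_eqF // scale1r addrC subrK.
apply: maximal_monotone_related => y u Tyu.
have := x_related y (rho *: u - z) (ex_intro2 _ _ u Tyu erefl).
have -> : x + (rho *: u - z) = - (rho *: (rho^-1 *: (z - x) - u)).
  by rewrite scalerBr scalerA mulfV ?gt_eqF // scale1r !opprB addrCA.
rewrite (innerNr inner_prod) (innerZr inner_prod) oppr_le0.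
by rewrite pmulr_rge0.
Qed.

End MaximalMonotone.

Section Resolvent.
Variables (R : realType) (V : completeNormedModType R) (inner : V -> V -> R).
Variables (T : V -> set V) (z : V).
Hypotheses (inner_prod : is_inner_product inner) (T_max : maximal_monotone inner T).

Lemma resolventP rho : 0 < rho ->
  exists2 u, T (resolvent T rho z) u & resolvent T rho z - z = - (rho *: u).
Proof.
move=> rho0; have [x [u [Txu zE]]] := minty inner_prod T_max z rho0.
have [|u' Tu' zE'] := @xgetPex _ z [set x | exists2 u, T x u & z = x + rho *: u].
  by exists x, u.
by exists u' => //; rewrite {2}zE' opprD addrA subrr add0r.
Qed.

Lemma resolvent_dist_le r1 r2 : 0 < r1 -> r1 <= r2 ->
  `|resolvent T r1 z - z| <= `|resolvent T r2 z - z|.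
Proof.
move=> r1_gt0 r12; have r2_gt0 := lt_le_trans r1_gt0 r12.
have [u1 T1 J1] := resolventP r1_gt0; have [u2 T2 J2] := resolventP r2_gt0.
have := T_max.1 _ _ _ _ T1 T2.
have -> : resolvent T r1 z - resolvent T r2 z = r2 *: u2 - r1 *: u1.
  by rewrite -(subrKA z) (addrC z) J1 (addrC (- _) z) -opprB J2 opprK addrC.
rewrite J1 J2 !normrN !normrZ !gtr0_norm // !(innerE inner_prod) !(inner_sqr inner_prod).
rewrite (innerC inner_prod u2 u1).
have := inner_le_normM inner_prod u1 u2; have := normr_ge0 u1; have := normr_ge0 u2.
set q := inner u1 u2; set a := `|u1|; set b := `|u2|.
move=> b0 a0 qab mono.
case: (lerP (r1 * a) (r2 * b)) => // ab; exfalso.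
have : b < a.
  by apply: contraTT ab; rewrite -!leNgt => ab; apply: ler_pM => //; exact: ltW.
nra.
Qed.

Lemma resolvent_dist_gt0 r : 0 < r -> ~ T z 0 -> 0 < `|resolvent T r z - z|.
Proof.
move=> r0 Tz0; have [u Tu Ju] := resolventP r0.
rewrite Ju normrN normrZ gtr0_norm // pmulr_rgt0 // normr_gt0.
apply/eqP => u0; apply: Tz0.
by move: Ju Tu; rewrite u0 scaler0 oppr0 => /subr0_eq ->.
Qed.

Variables (a b : R).
Hypotheses (a_ge0 : 0 <= a) (b_ge0 : 0 <= b).

Lemma psi_le r1 r2 : 0 < r1 -> r1 <= r2 -> psi T a b r1 z <= psi T a b r2 z.
Proof.
move=> r1_gt0 r12; have r2_gt0 := lt_le_trans r1_gt0 r12.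
have := resolvent_dist_le r1_gt0 r12; rewrite /psi.
have := normr_ge0 (resolvent T r1 z - z).
set p1 := `|_ - z|; set p2 := `|_ - z| => p1_ge0 p12.
have r12_sqr : r1 ^+ 2 <= r2 ^+ 2 by nra.
have rp12 : r1 * p1 <= r2 * p2 by apply: ler_pM => //; exact: ltW.
have : (r1 * p1) ^+ 2 <= (r2 * p2) ^+ 2.
  have : 0 <= r1 * p1 by rewrite mulr_ge0 // ltW.
  move: rp12; set P1 := r1 * p1; set P2 := r2 * p2; nra.
have : a * r1 ^+ 2 <= a * r2 ^+ 2 by rewrite ler_wpM2l.
have : b * r1 <= b * r2 by rewrite ler_wpM2l.
lra.
Qed.

Lemma psi_mulr_le r1 r2 : 0 < r1 -> r1 <= r2 ->
  r2 * psi T a b r1 z <= r1 * psi T a b r2 z.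
Proof.
move=> r1_gt0 r12; have r2_gt0 := lt_le_trans r1_gt0 r12.
have := resolvent_dist_le r1_gt0 r12; rewrite /psi -subr_ge0.
have := normr_ge0 (resolvent T r1 z - z).
set p1 := `|_ - z|; set p2 := `|_ - z| => p1_ge0 p12.
have -> : r1 * (a * r2 ^+ 2 + b * r2 + (r2 * p2) ^+ 2)
          - r2 * (a * r1 ^+ 2 + b * r1 + (r1 * p1) ^+ 2)
        = r1 * r2 * (a * (r2 - r1) + (r2 * p2 ^+ 2 - r1 * p1 ^+ 2)) by ring.
have p12_sqr : p1 ^+ 2 <= p2 ^+ 2 by nra.
apply: mulr_ge0; first by rewrite mulr_ge0 // ltW.
apply: addr_ge0; first by rewrite mulr_ge0 // subr_ge0.
by rewrite subr_ge0 ler_pM // ?sqr_ge0 // ltW.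
Qed.

Lemma psi_lt_ltr r1 r2 : 0 < r2 -> psi T a b r1 z < psi T a b r2 z -> r1 < r2.
Proof.
move=> r2_gt0 psi12; rewrite ltNge; apply/negP => r21.
by have := psi_le r2_gt0 r21; rewrite leNgt psi12.
Qed.

Lemma psi_gt0 r : 0 < r -> ~ T z 0 -> 0 < psi T a b r z.
Proof.
move=> r_gt0 Tz0; have := resolvent_dist_gt0 r_gt0 Tz0; rewrite /psi => p_gt0.
have : 0 < (r * `|resolvent T r z - z|) ^+ 2 by rewrite exprn_gt0 // mulr_gt0.
have : 0 <= a * r ^+ 2 by rewrite mulr_ge0 // sqr_ge0.
have : 0 <= b * r by rewrite mulr_ge0 // ltW.
lra.
Qed.

End Resolvent.

Theorem lemma5p7 (R : realType) (V : completeNormedModType R)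
  (inner : V -> V -> R) (T : V -> set V) (a b : R) (z : V)
  (theta_m theta_p rho_m rho_p rho : R) :
  is_inner_product inner ->
  maximal_monotone inner T ->
  0 <= a -> 0 <= b ->
  ~ T z 0 ->
  0 < theta_m -> theta_m < theta_p ->
  0 < rho_m -> 0 < rho_p ->
  psi T a b rho_m z = theta_m ->
  psi T a b rho_p z = theta_p ->
  0 < rho ->
  (psi T a b rho z < theta_m ->
     rho < rho_m /\ rho_p <= rho * theta_p / psi T a b rho z) /\
  (theta_p < psi T a b rho z ->
     rho * theta_m / psi T a b rho z <= rho_m /\ rho_p < rho).
Proof.
move=> ip T_max a_ge0 b_ge0 Tz0 _ theta_mp rho_m_gt0 rho_p_gt0 psi_m psi_p rho_gt0.
have psi_lt := psi_lt_ltr (z := z) ip T_max a_ge0 b_ge0.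
have psi_mulr := psi_mulr_le z ip T_max b a_ge0.
have psi_rho_gt0 := psi_gt0 ip T_max a_ge0 b_ge0 rho_gt0 Tz0.
split=> psi_rho.
- have rho_lt_m : rho < rho_m by apply: psi_lt rho_m_gt0 _; rewrite psi_m.
  have rho_lt_p : rho < rho_p by apply: psi_lt rho_p_gt0 _; rewrite psi_p; lra.
  split=> //; rewrite ler_pdivlMr // -psi_p.
  exact: psi_mulr rho_gt0 (ltW rho_lt_p).
- have m_lt_rho : rho_m < rho by apply: psi_lt rho_gt0 _; rewrite psi_m; lra.
  have p_lt_rho : rho_p < rho by apply: psi_lt rho_gt0 _; rewrite psi_p.
  split=> //; rewrite ler_pdivrMr // -psi_m.
  exact: psi_mulr rho_m_gt0 (ltW m_lt_rho).
Qed.
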